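(* Let $N$ be a $4$-dimensional Lorentzian space form of constant sectional curvature $L_0$, with metric $h$ and Levi-Civita connection $\nabla$. Let $M$ be a Lorentz surface and $F:M\to N$ a time-like conformal immersion. Let $(u,v)$ be local coordinates compatible with the paracomplex structure of $M$, so that the induced metric is $e^{2\lambda}(du^2-dv^2)$. Put $T_1=dF(\partial/\partial u)$, $T_2=dF(\partial/\partial v)$ and let $N_1,N_2$ be normal vector fields with $h(N_1,N_1)=h(N_2,N_2)=e^{2\lambda}$, $h(N_1,N_2)=0$. Define real functions $\alpha_k,\beta_k$ ($k=1,2,3$), $\mu_1,\mu_2$ by $$\sigma(T_1,T_1)=\alpha_1N_1+\beta_1N_2,\quad\sigma(T_1,T_2)=\alpha_2N_1+\beta_2N_2,\quad\sigma(T_2,T_2)=\alpha_3N_1+\beta_3N_2,$$ $$\nabla^\perp_{\partial/\partial u}N_1=\lambda_uN_1+\mu_1N_2,\qquad \nabla^\perp_{\partial/\partial v}N_1=\lambda_vN_1+\mu_2N_2,$$ with $\sigma$ the second fundamental form and $\nabla^\perp$ the normal connection. Set $$W=\alpha_2+\sqrt{-1}\beta_1,\quad X=\alpha_2+\sqrt{-1}\beta_3,\quad Y=\beta_2-\sqrt{-1}\alpha_1,\quad Z=\beta_2-\sqrt{-1}\alpha_3,$$ $$\phi=\lambda_u-\sqrt{-1}\mu_2,\qquad\psi=\lambda_v-\sqrt{-1}\mu_1.$$ Then $W+\overline{W}=X+\overline{X}$, $Y+\overline{Y}=Z+\overline{Z}$, $$WX+YZ+L_0e^{2\lambda}+\phi_u-\psi_v=0,$$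 and $$Y_v+\sqrt{-1}X_u=-\sqrt{-1}W\phi-Z\psi,\qquad W_v-\sqrt{-1}Z_u=\sqrt{-1}Y\phi-X\psi.$$
   Context: A time-like immersion is one whose induced metric is Lorentzian. All objects are smooth; subscripts $u,v$ denote partial derivatives. *)

From Stdlib Require Import Reals Lra List.
From Coquelicot Require Import Coquelicot.
Open Scope R_scope.

Definition du (f : R -> R -> R) : R -> R -> R := fun u v => Derive (fun t => f t v) u.
Definition dv (f : R -> R -> R) : R -> R -> R := fun u v => Derive (fun t => f u t) v.

Fixpoint pdn (ds : list bool) (f : R -> R -> R) : R -> R -> R :=
  match ds with
  | nil => f
  | b :: ds' => (if b then du else dv) (pdn ds' f)
  end.

Definition open2 (U : R -> R -> Prop) : Prop :=
  forall u v, U u v -> exists eps, 0 < eps /\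
    forall u' v', Rabs (u' - u) < eps -> Rabs (v' - v) < eps -> U u' v'.

Definition smooth_on (U : R -> R -> Prop) (f : R -> R -> R) : Prop :=
  forall (ds : list bool) u v, U u v ->
    ex_derive (fun t => pdn ds f t v) u /\
    ex_derive (fun t => pdn ds f u t) v /\
    continuous (fun p : R * R => pdn ds f (fst p) (snd p)) (u, v).

(** Vectors of R^5 are functions [nat -> R]; only components 0..4 matter. *)
Definition vec := nat -> R.

Definition sgnR (x : R) : R :=
  match Rlt_dec 0 x with
  | left _ => 1
  | right _ => match Rlt_dec x 0 with left _ => -1 | right _ => 0 end
  end.

(** L0 > 0 : R^5_1, N = de Sitter space  {eta(x,x) = 1/L0}.
    L0 < 0 : R^5_2, N = anti-de Sitter space {eta(x,x) = 1/L0}.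
    L0 = 0 : N = Minkowski space R^4_1 = {x4 = 0}. *)
Definition eta (L0 : R) (x y : vec) : R :=
  - x 0%nat * y 0%nat + x 1%nat * y 1%nat + x 2%nat * y 2%nat + x 3%nat * y 3%nat
  + sgnR L0 * x 4%nat * y 4%nat.

Definition inN (L0 : R) (x : vec) : Prop :=
  (L0 = 0 -> x 4%nat = 0) /\ (L0 <> 0 -> eta L0 x x = / L0).

Definition tangentN (L0 : R) (x w : vec) : Prop :=
  (L0 = 0 -> w 4%nat = 0) /\ (L0 <> 0 -> eta L0 x w = 0).

(** Levi-Civita connection of N: the covariant derivative along a curve through x
    whose ambient derivative is w is the tangential projection of w
    (for L0 <> 0, the normal of the quadric is x with eta(x,x)=1/L0;
     for L0 = 0 this is w itself). *)
Definition nablaN (L0 : R) (x w : vec) : vec :=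
  fun i => w i - L0 * eta L0 w x * x i.

Definition vfield := R -> R -> vec.

Definition duV (X : vfield) : vfield := fun u v i => du (fun a b => X a b i) u v.
Definition dvV (X : vfield) : vfield := fun u v i => dv (fun a b => X a b i) u v.

Definition vlin (a : R) (x : vec) (b : R) (y : vec) : vec := fun i => a * x i + b * y i.
Definition vsub (x y : vec) : vec := fun i => x i - y i.

Definition tangent_surf (T1 T2 w : vec) : Prop :=
  exists a b : R, forall i, (i < 5)%nat -> w i = a * T1 i + b * T2 i.

(** [sigma_is L0 F T1 T2 DT n] : the normal component (second fundamental form)
    of the covariant derivative nabla_{DT} at F equals n, i.e.
    nabla - n is tangent to the surface (n itself being normal). *)
Definition normal_part_is (L0 : R) (x T1 T2 Dw n : vec) : Prop :=
  tangent_surf T1 T2 (vsub (nablaN L0 x Dw) n).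

Definition cfun := R -> R -> C.
Definition mkC (f g : R -> R -> R) : cfun := fun u v => (f u v, g u v).
Definition duC (f : cfun) : cfun :=
  fun u v => (du (fun a b => fst (f a b)) u v, du (fun a b => snd (f a b)) u v).
Definition dvC (f : cfun) : cfun :=
  fun u v => (dv (fun a b => fst (f a b)) u v, dv (fun a b => snd (f a b)) u v).

From Stdlib Require Import Reals Lra Lia List FunctionalExtensionality.
From Coquelicot Require Import Coquelicot.
Open Scope R_scope.

(** Split into real and imaginary parts, the first two complex equations are identities
    and the last three are the Gauss, Ricci and four Codazzi equations.  These are the
    integrability conditions [(F_uu)_v = (F_uv)_u], [(F_uv)_v = (F_vv)_u] and
    [(N1_u)_v = (N1_v)_u] paired with [F_v], [N1] and [N2]: when [P_v = Q_u],
    [<P,Z>_v - <Q,Z>_u = <P,Z_v> - <Q,Z_u>], and both pairings on the right are evaluated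
    in the orthogonal frame [(F_u, F_v, N1, N2, F)] through the Gauss-Weingarten
    coordinates of the derivatives, themselves obtained by differentiating the relations
    that define the frame. *)

Lemma pdn_snoc ds b f : pdn (ds ++ b :: nil) f = pdn ds ((if b then du else dv) f).
Proof. induction ds as [|c ds IH]; simpl; [reflexivity | now rewrite IH]. Qed.

Lemma smooth_on_du U f : smooth_on U f -> smooth_on U (du f).
Proof. intros Hf ds u v Huv. rewrite <- (pdn_snoc ds true). now apply Hf. Qed.

Lemma smooth_on_dv U f : smooth_on U f -> smooth_on U (dv f).
Proof. intros Hf ds u v Huv. rewrite <- (pdn_snoc ds false). now apply Hf. Qed.

Lemma smooth_on_ex_derive_u U f u v : smooth_on U f -> U u v -> ex_derive (fun t => f t v) u.
Proof. intros Hf Huv. exact (proj1 (Hf nil u v Huv)). Qed.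

Lemma smooth_on_ex_derive_v U f u v : smooth_on U f -> U u v -> ex_derive (fun t => f u t) v.
Proof. intros Hf Huv. exact (proj1 (proj2 (Hf nil u v Huv))). Qed.

Lemma open2_locally_2d U u v : open2 U -> U u v -> locally_2d U u v.
Proof.
  intros HU Huv. destruct (HU u v Huv) as [eps [Heps Hball]].
  exists (mkposreal eps Heps). exact Hball.
Qed.

Lemma du_ext_on U f g u v :
  open2 U -> U u v -> (forall a b, U a b -> f a b = g a b) -> du f u v = du g u v.
Proof.
  intros HU Huv Hfg. apply Derive_ext_loc.
  destruct (open2_locally_2d U u v HU Huv) as [eps Hball].
  exists eps. intros t Ht. apply Hfg, Hball; [exact Ht |].
  rewrite Rminus_eq_0, Rabs_R0. apply cond_pos.
Qed.

Lemma dv_ext_on U f g u v :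
  open2 U -> U u v -> (forall a b, U a b -> f a b = g a b) -> dv f u v = dv g u v.
Proof.
  intros HU Huv Hfg. apply Derive_ext_loc.
  destruct (open2_locally_2d U u v HU Huv) as [eps Hball].
  exists eps. intros t Ht. apply Hfg, Hball; [| exact Ht].
  rewrite Rminus_eq_0, Rabs_R0. apply cond_pos.
Qed.

Lemma dv_du_comm U f u v : open2 U -> smooth_on U f -> U u v -> dv (du f) u v = du (dv f) u v.
Proof.
  intros HU Hf Huv. symmetry. apply Schwarz.
  - apply (locally_2d_impl U); [| exact (open2_locally_2d U u v HU Huv)].
    apply locally_2d_forall. intros a b Hab.
    repeat split.
    + exact (smooth_on_ex_derive_u U f a b Hf Hab).
    + exact (smooth_on_ex_derive_v U f a b Hf Hab).
    + exact (smooth_on_ex_derive_u U (dv f) a b (smooth_on_dv U f Hf) Hab).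
    + exact (smooth_on_ex_derive_v U (du f) a b (smooth_on_du U f Hf) Hab).
  - apply continuity_2d_pt_filterlim. exact (proj2 (proj2 (Hf (true :: false :: nil) u v Huv))).
  - apply continuity_2d_pt_filterlim. exact (proj2 (proj2 (Hf (false :: true :: nil) u v Huv))).
Qed.

Lemma du_const c u v : du (fun _ _ => c) u v = 0.
Proof. unfold du. apply Derive_const. Qed.

Lemma dv_const c u v : dv (fun _ _ => c) u v = 0.
Proof. unfold dv. apply Derive_const. Qed.

Lemma du_opp f u v : du (fun a b => - f a b) u v = - du f u v.
Proof. unfold du. apply Derive_opp. Qed.

Lemma dv_opp f u v : dv (fun a b => - f a b) u v = - dv f u v.
Proof. unfold dv. apply Derive_opp. Qed.

Lemma du_exp_mul lam h u v :
  ex_derive (fun t => lam t v) u -> ex_derive (fun t => h t v) u ->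
  du (fun a b => exp (2 * lam a b) * h a b) u v
  = exp (2 * lam u v) * (2 * du lam u v * h u v + du h u v).
Proof. intros Hl Hh. apply is_derive_unique. auto_derive; [tauto | unfold du; ring]. Qed.

Lemma dv_exp_mul lam h u v :
  ex_derive (fun t => lam u t) v -> ex_derive (fun t => h u t) v ->
  dv (fun a b => exp (2 * lam a b) * h a b) u v
  = exp (2 * lam u v) * (2 * dv lam u v * h u v + dv h u v).
Proof. intros Hl Hh. apply is_derive_unique. auto_derive; [tauto | unfold dv; ring]. Qed.

Definition vsmooth_on (U : R -> R -> Prop) (P : vfield) : Prop :=
  forall i, smooth_on U (fun u v => P u v i).

Lemma vsmooth_on_du U P : vsmooth_on U P -> vsmooth_on U (duV P).
Proof. intros HP i. exact (smooth_on_du U _ (HP i)). Qed.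

Lemma vsmooth_on_dv U P : vsmooth_on U P -> vsmooth_on U (dvV P).
Proof. intros HP i. exact (smooth_on_dv U _ (HP i)). Qed.

Lemma eta_sym L0 x y : eta L0 x y = eta L0 y x.
Proof. unfold eta. ring. Qed.

Lemma Derive_eta L0 (p q : R -> vec) t :
  (forall i, ex_derive (fun s => p s i) t) -> (forall i, ex_derive (fun s => q s i) t) ->
  Derive (fun s => eta L0 (p s) (q s)) t
  = eta L0 (fun i => Derive (fun s => p s i) t) (q t)
    + eta L0 (p t) (fun i => Derive (fun s => q s i) t).
Proof.
  intros Hp Hq.
  (* [auto_derive] only sees unknown functions applied to the variable as last argument. *)
  pose (P i s := p s i). pose (Q i s := q s i).
  change (fun s => eta L0 (p s) (q s)) with (fun s => eta L0 (fun i => P i s) (fun i => Q i s)).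
  change (fun i => Derive (fun s => p s i) t) with (fun i => Derive (fun s => P i s) t).
  change (fun i => Derive (fun s => q s i) t) with (fun i => Derive (fun s => Q i s) t).
  change (p t) with (fun i => P i t). change (q t) with (fun i => Q i t).
  apply is_derive_unique. unfold eta. auto_derive.
  - repeat split; match goal with
      | |- ex_derive (fun x => P ?i x) _ => exact (Hp i)
      | |- ex_derive (fun x => Q ?i x) _ => exact (Hq i)
      end.
  - ring.
Qed.

Lemma du_eta_on L0 U P Q g u v :
  open2 U -> U u v -> vsmooth_on U P -> vsmooth_on U Q ->
  (forall a b, U a b -> eta L0 (P a b) (Q a b) = g a b) ->
  eta L0 (duV P u v) (Q u v) + eta L0 (P u v) (duV Q u v) = du g u v.
Proof.
  intros HU Huv HP HQ Hg.
  rewrite <- (du_ext_on U (fun a b => eta L0 (P a b) (Q a b))) by assumption.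
  unfold du. rewrite Derive_eta; [reflexivity | intro i ..].
  - exact (smooth_on_ex_derive_u U _ u v (HP i) Huv).
  - exact (smooth_on_ex_derive_u U _ u v (HQ i) Huv).
Qed.

Lemma dv_eta_on L0 U P Q g u v :
  open2 U -> U u v -> vsmooth_on U P -> vsmooth_on U Q ->
  (forall a b, U a b -> eta L0 (P a b) (Q a b) = g a b) ->
  eta L0 (dvV P u v) (Q u v) + eta L0 (P u v) (dvV Q u v) = dv g u v.
Proof.
  intros HU Huv HP HQ Hg.
  rewrite <- (dv_ext_on U (fun a b => eta L0 (P a b) (Q a b))) by assumption.
  unfold dv. rewrite Derive_eta; [reflexivity | intro i ..].
  - exact (smooth_on_ex_derive_v U _ u v (HP i) Huv).
  - exact (smooth_on_ex_derive_v U _ u v (HQ i) Huv).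
Qed.

Lemma duV_ext_on U (P Q : vfield) u v :
  open2 U -> U u v -> (forall a b, U a b -> P a b = Q a b) -> duV P u v = duV Q u v.
Proof.
  intros HU Huv HPQ. extensionality i.
  apply (du_ext_on U); [assumption .. |]. intros a b Hab. now rewrite HPQ.
Qed.

Lemma dvV_duV_comm U P u v :
  open2 U -> vsmooth_on U P -> U u v -> dvV (duV P) u v = duV (dvV P) u v.
Proof. intros HU HP Huv. extensionality i. exact (dv_du_comm U _ u v HU (HP i) Huv). Qed.

Lemma eta_mixed_partials L0 U P Q Z p q u v :
  open2 U -> U u v -> vsmooth_on U P -> vsmooth_on U Q -> vsmooth_on U Z ->
  dvV P u v = duV Q u v ->
  (forall a b, U a b -> eta L0 (P a b) (Z a b) = p a b) ->
  (forall a b, U a b -> eta L0 (Q a b) (Z a b) = q a b) ->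
  dv p u v - du q u v = eta L0 (P u v) (dvV Z u v) - eta L0 (Q u v) (duV Z u v).
Proof.
  intros HU Huv HP HQ HZ HPQ Hp Hq.
  rewrite <- (dv_eta_on L0 U P Z p), <- (du_eta_on L0 U Q Z q), HPQ by assumption.
  ring.
Qed.

Set Implicit Arguments.

Record conformal_frame (L0 e : R) (x T1 T2 N1 N2 : vec) : Prop := {
  frame_scale_neq0 : e <> 0;
  frame_T1T1 : eta L0 T1 T1 = e;
  frame_T2T2 : eta L0 T2 T2 = - e;
  frame_T1T2 : eta L0 T1 T2 = 0;
  frame_N1T1 : eta L0 N1 T1 = 0;
  frame_N1T2 : eta L0 N1 T2 = 0;
  frame_N2T1 : eta L0 N2 T1 = 0;
  frame_N2T2 : eta L0 N2 T2 = 0;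
  frame_N1N1 : eta L0 N1 N1 = e;
  frame_N2N2 : eta L0 N2 N2 = e;
  frame_N1N2 : eta L0 N1 N2 = 0;
  frame_xT1 : L0 <> 0 -> eta L0 x T1 = 0;
  frame_xT2 : L0 <> 0 -> eta L0 x T2 = 0;
  frame_xN1 : L0 <> 0 -> eta L0 x N1 = 0;
  frame_xN2 : L0 <> 0 -> eta L0 x N2 = 0 }.

(** When [w] lies in the span of the frame and [x], [c1 .. c4] are its coordinates along
    [T1 T2 N1 N2]; [c5] is [eta x w / e]. *)
Record frame_coords (L0 e : R) (x T1 T2 N1 N2 w : vec) (c1 c2 c3 c4 c5 : R) : Prop := {
  coord_T1 : eta L0 w T1 = e * c1;
  coord_T2 : eta L0 w T2 = - (e * c2);
  coord_N1 : eta L0 w N1 = e * c3;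
  coord_N2 : eta L0 w N2 = e * c4;
  coord_x : L0 <> 0 -> eta L0 x w = e * c5 }.

Lemma normal_part_expansion L0 x T1 T2 w a N1 b N2 :
  normal_part_is L0 x T1 T2 w (vlin a N1 b N2) ->
  exists A B, forall z, eta L0 w z = A * eta L0 T1 z + B * eta L0 T2 z
    + a * eta L0 N1 z + b * eta L0 N2 z + L0 * eta L0 w x * eta L0 x z.
Proof.
  intros [A [B Htan]]. exists A, B. intros z.
  unfold vsub, nablaN, vlin in Htan. set (k := eta L0 w x) in *.
  assert (Hw : forall i, (i < 5)%nat ->
    w i = A * T1 i + B * T2 i + a * N1 i + b * N2 i + L0 * k * x i).
  { intros i Hi. specialize (Htan i Hi). lra. }
  unfold eta at 1. rewrite !Hw by lia. unfold eta. ring.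
Qed.

Lemma eta_x_term L0 x w y :
  (L0 <> 0 -> eta L0 x y = 0) -> L0 * eta L0 w x * eta L0 x y = 0.
Proof.
  intros Hy. destruct (Req_dec L0 0) as [H0 | H0]; [rewrite H0 | rewrite (Hy H0)]; ring.
Qed.

Section FrameExpansion.

Variables (L0 e : R) (x T1 T2 N1 N2 w : vec) (a b : R).
Hypothesis Hframe : conformal_frame L0 e x T1 T2 N1 N2.
Hypothesis Hw_normal : normal_part_is L0 x T1 T2 w (vlin a N1 b N2).

Lemma eta_normal_part : eta L0 w N1 = e * a /\ eta L0 w N2 = e * b.
Proof.
  destruct Hframe as [_ _ _ _ H1T1 H1T2 H2T1 H2T2 H11 H22 H12 _ _ HxN1 HxN2].
  destruct (normal_part_expansion Hw_normal) as [A [B Hexp]].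
  rewrite (Hexp N1), (Hexp N2), !eta_x_term by assumption.
  rewrite (eta_sym L0 T1 N1), (eta_sym L0 T2 N1), (eta_sym L0 N2 N1),
    (eta_sym L0 T1 N2), (eta_sym L0 T2 N2), H1T1, H1T2, H2T1, H2T2, H11, H22, H12.
  split; ring.
Qed.

Lemma eta_frame_expansion z c1 c2 c3 c4 c5 d1 d2 d3 d4 d5 :
  frame_coords L0 e x T1 T2 N1 N2 w c1 c2 c3 c4 c5 ->
  frame_coords L0 e x T1 T2 N1 N2 z d1 d2 d3 d4 d5 ->
  eta L0 w z = e * (c1 * d1 - c2 * d2 + c3 * d3 + c4 * d4 + L0 * e * c5 * d5).
Proof.
  intros [Hw1 Hw2 Hw3 Hw4 Hwx] [Hz1 Hz2 Hz3 Hz4 Hzx].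
  destruct eta_normal_part as [Ha Hb].
  destruct Hframe as [He H11 H22 H12 H1T1 H1T2 H2T1 H2T2 _ _ _ HxT1 HxT2 _ _].
  destruct (normal_part_expansion Hw_normal) as [A [B Hexp]].
  assert (HA : A = c1).
  { apply (Rmult_eq_reg_l e); [| exact He].
    rewrite Hexp, eta_x_term, (eta_sym L0 T2 T1), H11, H12, H1T1, H2T1 in Hw1 by exact HxT1.
    lra. }
  assert (HB : B = c2).
  { apply (Rmult_eq_reg_l e); [| exact He].
    rewrite Hexp, eta_x_term, H22, H12, H1T2, H2T2 in Hw2 by exact HxT2.
    lra. }
  assert (Ha' : a = c3) by (apply (Rmult_eq_reg_l e); [rewrite <- Ha; exact Hw3 | exact He]).
  assert (Hb' : b = c4) by (apply (Rmult_eq_reg_l e); [rewrite <- Hb; exact Hw4 | exact He]).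
  rewrite Hexp, (eta_sym L0 T1), (eta_sym L0 T2), (eta_sym L0 N1), (eta_sym L0 N2),
    Hz1, Hz2, Hz3, Hz4, HA, HB, Ha', Hb'.
  destruct (Req_dec L0 0) as [H0 | H0].
  - rewrite H0. ring.
  - rewrite (eta_sym L0 w x), (Hwx H0), (Hzx H0). ring.
Qed.

End FrameExpansion.

Unset Implicit Arguments.

Section TimelikeSurface.

Variables (L0 : R) (U : R -> R -> Prop) (F N1 N2 : vfield)
  (lam a1 a2 a3 b1 b2 b3 mu1 mu2 : R -> R -> R).

Local Notation h := (eta L0).
Local Notation e u v := (exp (2 * lam u v)).
Local Notation Fu := (duV F).
Local Notation Fv := (dvV F).

Hypothesis HU : open2 U.
Hypotheses (HF : vsmooth_on U F) (HN1 : vsmooth_on U N1) (HN2 : vsmooth_on U N2).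
Hypotheses (Hlam : smooth_on U lam)
  (Ha1 : smooth_on U a1) (Ha2 : smooth_on U a2) (Ha3 : smooth_on U a3)
  (Hb1 : smooth_on U b1) (Hb2 : smooth_on U b2) (Hb3 : smooth_on U b3)
  (Hmu1 : smooth_on U mu1) (Hmu2 : smooth_on U mu2).
Hypothesis HinN : forall u v, U u v -> inN L0 (F u v).
Hypothesis Hmetric : forall u v, U u v ->
  h (Fu u v) (Fu u v) = e u v /\ h (Fv u v) (Fv u v) = - e u v /\ h (Fu u v) (Fv u v) = 0.
Hypothesis Hnormal : forall u v, U u v ->
  tangentN L0 (F u v) (N1 u v) /\ tangentN L0 (F u v) (N2 u v) /\
  h (N1 u v) (Fu u v) = 0 /\ h (N1 u v) (Fv u v) = 0 /\
  h (N2 u v) (Fu u v) = 0 /\ h (N2 u v) (Fv u v) = 0 /\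
  h (N1 u v) (N1 u v) = e u v /\ h (N2 u v) (N2 u v) = e u v /\ h (N1 u v) (N2 u v) = 0.
Hypothesis Hsff : forall u v, U u v ->
  normal_part_is L0 (F u v) (Fu u v) (Fv u v) (duV Fu u v)
    (vlin (a1 u v) (N1 u v) (b1 u v) (N2 u v)) /\
  normal_part_is L0 (F u v) (Fu u v) (Fv u v) (duV Fv u v)
    (vlin (a2 u v) (N1 u v) (b2 u v) (N2 u v)) /\
  normal_part_is L0 (F u v) (Fu u v) (Fv u v) (dvV Fv u v)
    (vlin (a3 u v) (N1 u v) (b3 u v) (N2 u v)).
Hypothesis Hnc : forall u v, U u v ->
  normal_part_is L0 (F u v) (Fu u v) (Fv u v) (duV N1 u v)
    (vlin (du lam u v) (N1 u v) (mu1 u v) (N2 u v)) /\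
  normal_part_is L0 (F u v) (Fu u v) (Fv u v) (dvV N1 u v)
    (vlin (dv lam u v) (N1 u v) (mu2 u v) (N2 u v)).

Local Hint Resolve vsmooth_on_du vsmooth_on_dv : core.

Lemma du_eta_orth P Q u v : vsmooth_on U P -> vsmooth_on U Q -> U u v ->
  (forall a b, U a b -> h (P a b) (Q a b) = 0) ->
  h (duV P u v) (Q u v) + h (P u v) (duV Q u v) = 0.
Proof.
  intros HP HQ Huv H0.
  pose proof (du_eta_on L0 U P Q (fun _ _ => 0) u v HU Huv HP HQ H0) as E.
  rewrite du_const in E. exact E.
Qed.

Lemma dv_eta_orth P Q u v : vsmooth_on U P -> vsmooth_on U Q -> U u v ->
  (forall a b, U a b -> h (P a b) (Q a b) = 0) ->
  h (dvV P u v) (Q u v) + h (P u v) (dvV Q u v) = 0.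
Proof.
  intros HP HQ Huv H0.
  pose proof (dv_eta_on L0 U P Q (fun _ _ => 0) u v HU Huv HP HQ H0) as E.
  rewrite dv_const in E. exact E.
Qed.

Lemma du_eta_norm P c u v : vsmooth_on U P -> U u v ->
  (forall a b, U a b -> h (P a b) (P a b) = e a b * c) ->
  h (duV P u v) (P u v) = e u v * (du lam u v * c).
Proof.
  intros HP Huv Hc.
  pose proof (du_eta_on L0 U P P (fun a b => e a b * c)
    u v HU Huv HP HP Hc) as E.
  rewrite du_exp_mul, du_const, (eta_sym L0 (P u v)) in E.
  - lra.
  - exact (smooth_on_ex_derive_u U lam u v Hlam Huv).
  - apply ex_derive_const.
Qed.

Lemma dv_eta_norm P c u v : vsmooth_on U P -> U u v ->
  (forall a b, U a b -> h (P a b) (P a b) = e a b * c) ->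
  h (dvV P u v) (P u v) = e u v * (dv lam u v * c).
Proof.
  intros HP Huv Hc.
  pose proof (dv_eta_on L0 U P P (fun a b => e a b * c)
    u v HU Huv HP HP Hc) as E.
  rewrite dv_exp_mul, dv_const, (eta_sym L0 (P u v)) in E.
  - lra.
  - exact (smooth_on_ex_derive_v U lam u v Hlam Huv).
  - apply ex_derive_const.
Qed.

Lemma F_perp_Fu u v : U u v -> L0 <> 0 -> h (F u v) (Fu u v) = 0.
Proof.
  intros Huv H0.
  pose proof (du_eta_on L0 U F F (fun _ _ => / L0) u v HU Huv HF HF
    (fun a b Hab => proj2 (HinN a b Hab) H0)) as E.
  rewrite du_const, (eta_sym L0 (Fu u v)) in E. lra.
Qed.

Lemma F_perp_Fv u v : U u v -> L0 <> 0 -> h (F u v) (Fv u v) = 0.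
Proof.
  intros Huv H0.
  pose proof (dv_eta_on L0 U F F (fun _ _ => / L0) u v HU Huv HF HF
    (fun a b Hab => proj2 (HinN a b Hab) H0)) as E.
  rewrite dv_const, (eta_sym L0 (Fv u v)) in E. lra.
Qed.

Lemma frame_at u v : U u v ->
  conformal_frame L0 (e u v) (F u v) (Fu u v) (Fv u v) (N1 u v) (N2 u v).
Proof.
  intros Huv.
  destruct (Hmetric u v Huv) as [H11 [H22 H12]].
  destruct (Hnormal u v Huv)
    as [[_ HxN1] [[_ HxN2] [H1T1 [H1T2 [H2T1 [H2T2 [HN11 [HN22 HN12]]]]]]]].
  constructor; auto using F_perp_Fu, F_perp_Fv.
  apply Rgt_not_eq, exp_pos.
Qed.

Ltac frame_tac :=
  match goal with
  | |- vsmooth_on _ _ => auto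
  | |- U _ _ => assumption
  | |- forall a b, U a b -> _ =>
      let Hab := fresh in intros ? ? Hab; destruct (frame_at _ _ Hab); solve [auto | lra]
  end.

Let coords u v := frame_coords L0 (e u v) (F u v) (Fu u v) (Fv u v) (N1 u v) (N2 u v).

Lemma Fuv_coords u v : U u v ->
  coords u v (duV Fv u v) (dv lam u v) (du lam u v) (a2 u v) (b2 u v) 0.
Proof.
  intros Huv.
  destruct (eta_normal_part (frame_at u v Huv) (proj1 (proj2 (Hsff u v Huv)))) as [Hw1 Hw2].
  split; [| | exact Hw1 | exact Hw2 | intros Hne].
  - rewrite <- (dvV_duV_comm U F u v HU HF Huv), (dv_eta_norm Fu 1) by frame_tac. ring.
  - rewrite (du_eta_norm Fv (-1)) by frame_tac. ring.
  - assert (E : h (Fu u v) (Fv u v) + h (F u v) (duV Fv u v) = 0)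
      by (apply du_eta_orth; frame_tac).
    rewrite (frame_T1T2 (frame_at u v Huv)) in E. lra.
Qed.

Lemma Fuu_coords u v : U u v ->
  coords u v (duV Fu u v) (du lam u v) (dv lam u v) (a1 u v) (b1 u v) (-1).
Proof.
  intros Huv. pose proof (frame_at u v Huv) as Hf.
  destruct (eta_normal_part Hf (proj1 (Hsff u v Huv))) as [Hw1 Hw2].
  split; [| | exact Hw1 | exact Hw2 | intros Hne].
  - rewrite (du_eta_norm Fu 1) by frame_tac. ring.
  - assert (E : h (duV Fu u v) (Fv u v) + h (Fu u v) (duV Fv u v) = 0)
      by (apply du_eta_orth; frame_tac).
    rewrite (eta_sym L0 (Fu u v)), (coord_T1 (Fuv_coords u v Huv)) in E. lra.
  - assert (E : h (Fu u v) (Fu u v) + h (F u v) (duV Fu u v) = 0)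
      by (apply du_eta_orth; frame_tac).
    rewrite (frame_T1T1 Hf) in E. lra.
Qed.

Lemma Fvv_coords u v : U u v ->
  coords u v (dvV Fv u v) (du lam u v) (dv lam u v) (a3 u v) (b3 u v) 1.
Proof.
  intros Huv. pose proof (frame_at u v Huv) as Hf.
  destruct (eta_normal_part Hf (proj2 (proj2 (Hsff u v Huv)))) as [Hw1 Hw2].
  split; [| | exact Hw1 | exact Hw2 | intros Hne].
  - assert (E : h (dvV Fu u v) (Fv u v) + h (Fu u v) (dvV Fv u v) = 0)
      by (apply dv_eta_orth; frame_tac).
    rewrite (dvV_duV_comm U F u v HU HF Huv), (coord_T2 (Fuv_coords u v Huv)),
      (eta_sym L0 (Fu u v)) in E.
    lra.
  - rewrite (dv_eta_norm Fv (-1)) by frame_tac. ring.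
  - assert (E : h (Fv u v) (Fv u v) + h (F u v) (dvV Fv u v) = 0)
      by (apply dv_eta_orth; frame_tac).
    rewrite (frame_T2T2 Hf) in E. lra.
Qed.

Lemma N1u_coords u v : U u v ->
  coords u v (duV N1 u v) (- a1 u v) (a2 u v) (du lam u v) (mu1 u v) 0.
Proof.
  intros Huv. pose proof (frame_at u v Huv) as Hf.
  destruct (eta_normal_part Hf (proj1 (Hnc u v Huv))) as [Hw1 Hw2].
  split; [| | exact Hw1 | exact Hw2 | intros Hne].
  - assert (E : h (duV N1 u v) (Fu u v) + h (N1 u v) (duV Fu u v) = 0)
      by (apply du_eta_orth; frame_tac).
    rewrite (eta_sym L0 (N1 u v)), (coord_N1 (Fuu_coords u v Huv)) in E. lra.
  - assert (E : h (duV N1 u v) (Fv u v) + h (N1 u v) (duV Fv u v) = 0)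
      by (apply du_eta_orth; frame_tac).
    rewrite (eta_sym L0 (N1 u v)), (coord_N1 (Fuv_coords u v Huv)) in E. lra.
  - assert (E : h (Fu u v) (N1 u v) + h (F u v) (duV N1 u v) = 0)
      by (apply du_eta_orth; frame_tac).
    rewrite (eta_sym L0 (Fu u v)), (frame_N1T1 Hf) in E. lra.
Qed.

Lemma N1v_coords u v : U u v ->
  coords u v (dvV N1 u v) (- a2 u v) (a3 u v) (dv lam u v) (mu2 u v) 0.
Proof.
  intros Huv. pose proof (frame_at u v Huv) as Hf.
  destruct (eta_normal_part Hf (proj2 (Hnc u v Huv))) as [Hw1 Hw2].
  split; [| | exact Hw1 | exact Hw2 | intros Hne].
  - assert (E : h (dvV N1 u v) (Fu u v) + h (N1 u v) (dvV Fu u v) = 0)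
      by (apply dv_eta_orth; frame_tac).
    rewrite (dvV_duV_comm U F u v HU HF Huv), (eta_sym L0 (N1 u v)),
      (coord_N1 (Fuv_coords u v Huv)) in E.
    lra.
  - assert (E : h (dvV N1 u v) (Fv u v) + h (N1 u v) (dvV Fv u v) = 0)
      by (apply dv_eta_orth; frame_tac).
    rewrite (eta_sym L0 (N1 u v)), (coord_N1 (Fvv_coords u v Huv)) in E. lra.
  - assert (E : h (Fv u v) (N1 u v) + h (F u v) (dvV N1 u v) = 0)
      by (apply dv_eta_orth; frame_tac).
    rewrite (eta_sym L0 (Fv u v)), (frame_N1T2 Hf) in E. lra.
Qed.

Lemma N2u_coords u v : U u v ->
  coords u v (duV N2 u v) (- b1 u v) (b2 u v) (- mu1 u v) (du lam u v) 0.
Proof.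
  intros Huv. pose proof (frame_at u v Huv) as Hf.
  split; [| | | | intros Hne].
  - assert (E : h (duV N2 u v) (Fu u v) + h (N2 u v) (duV Fu u v) = 0)
      by (apply du_eta_orth; frame_tac).
    rewrite (eta_sym L0 (N2 u v)), (coord_N2 (Fuu_coords u v Huv)) in E. lra.
  - assert (E : h (duV N2 u v) (Fv u v) + h (N2 u v) (duV Fv u v) = 0)
      by (apply du_eta_orth; frame_tac).
    rewrite (eta_sym L0 (N2 u v)), (coord_N2 (Fuv_coords u v Huv)) in E. lra.
  - assert (E : h (duV N1 u v) (N2 u v) + h (N1 u v) (duV N2 u v) = 0)
      by (apply du_eta_orth; frame_tac).
    rewrite (eta_sym L0 (N1 u v)), (coord_N2 (N1u_coords u v Huv)) in E. lra.
  - rewrite (du_eta_norm N2 1) by frame_tac. ring.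
  - assert (E : h (Fu u v) (N2 u v) + h (F u v) (duV N2 u v) = 0)
      by (apply du_eta_orth; frame_tac).
    rewrite (eta_sym L0 (Fu u v)), (frame_N2T1 Hf) in E. lra.
Qed.

Lemma N2v_coords u v : U u v ->
  coords u v (dvV N2 u v) (- b2 u v) (b3 u v) (- mu2 u v) (dv lam u v) 0.
Proof.
  intros Huv. pose proof (frame_at u v Huv) as Hf.
  split; [| | | | intros Hne].
  - assert (E : h (dvV N2 u v) (Fu u v) + h (N2 u v) (dvV Fu u v) = 0)
      by (apply dv_eta_orth; frame_tac).
    rewrite (dvV_duV_comm U F u v HU HF Huv), (eta_sym L0 (N2 u v)),
      (coord_N2 (Fuv_coords u v Huv)) in E.
    lra.
  - assert (E : h (dvV N2 u v) (Fv u v) + h (N2 u v) (dvV Fv u v) = 0)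
      by (apply dv_eta_orth; frame_tac).
    rewrite (eta_sym L0 (N2 u v)), (coord_N2 (Fvv_coords u v Huv)) in E. lra.
  - assert (E : h (dvV N1 u v) (N2 u v) + h (N1 u v) (dvV N2 u v) = 0)
      by (apply dv_eta_orth; frame_tac).
    rewrite (eta_sym L0 (N1 u v)), (coord_N2 (N1v_coords u v Huv)) in E. lra.
  - rewrite (dv_eta_norm N2 1) by frame_tac. ring.
  - assert (E : h (Fv u v) (N2 u v) + h (F u v) (dvV N2 u v) = 0)
      by (apply dv_eta_orth; frame_tac).
    rewrite (eta_sym L0 (Fv u v)), (frame_N2T2 Hf) in E. lra.
Qed.

Ltac ex_derive_tac :=
  lazymatch goal with
  | |- ex_derive (fun t => ?f t ?v) ?u =>
      apply (smooth_on_ex_derive_u U f u v); [auto using smooth_on_du, smooth_on_dv | assumption]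
  | |- ex_derive (fun t => ?f ?u t) ?v =>
      apply (smooth_on_ex_derive_v U f u v); [auto using smooth_on_du, smooth_on_dv | assumption]
  end.

Lemma Fuuv_eq_Fuvu u v : U u v -> dvV (duV Fu) u v = duV (duV Fv) u v.
Proof.
  intros Huv. rewrite (dvV_duV_comm U Fu) by auto.
  apply (duV_ext_on U); [assumption .. |].
  intros a b Hab. apply (dvV_duV_comm U); auto.
Qed.

Lemma gauss_equation u v : U u v ->
  du (du lam) u v - dv (dv lam) u v
  = a1 u v * a3 u v + b1 u v * b3 u v - a2 u v ^ 2 - b2 u v ^ 2 - L0 * e u v.
Proof.
  intros Huv. pose proof (frame_at u v Huv) as Hf.
  pose proof (eta_mixed_partials L0 U (duV Fu) (duV Fv) Fv _ _ u v HU Huv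
    ltac:(auto) ltac:(auto) ltac:(auto) (Fuuv_eq_Fuvu u v Huv)
    (fun a b Hab => coord_T2 (Fuu_coords a b Hab))
    (fun a b Hab => coord_T2 (Fuv_coords a b Hab))) as E.
  rewrite (eta_frame_expansion Hf (proj1 (Hsff u v Huv))
       (Fuu_coords u v Huv) (Fvv_coords u v Huv)),
    (eta_frame_expansion Hf (proj1 (proj2 (Hsff u v Huv)))
       (Fuv_coords u v Huv) (Fuv_coords u v Huv)),
    dv_opp, du_opp, dv_exp_mul, du_exp_mul in E by ex_derive_tac.
  apply (Rmult_eq_reg_l (e u v)); [lra | exact (frame_scale_neq0 Hf)].
Qed.

Lemma ricci_equation u v : U u v ->
  dv mu1 u v - du mu2 u v = b2 u v * (a1 u v + a3 u v) - a2 u v * (b1 u v + b3 u v).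
Proof.
  intros Huv. pose proof (frame_at u v Huv) as Hf.
  pose proof (eta_mixed_partials L0 U (duV N1) (dvV N1) N2 _ _ u v HU Huv
    ltac:(auto) ltac:(auto) ltac:(auto) (dvV_duV_comm U N1 u v HU HN1 Huv)
    (fun a b Hab => coord_N2 (N1u_coords a b Hab))
    (fun a b Hab => coord_N2 (N1v_coords a b Hab))) as E.
  rewrite (eta_frame_expansion Hf (proj1 (Hnc u v Huv))
       (N1u_coords u v Huv) (N2v_coords u v Huv)),
    (eta_frame_expansion Hf (proj2 (Hnc u v Huv))
       (N1v_coords u v Huv) (N2u_coords u v Huv)),
    dv_exp_mul, du_exp_mul in E by ex_derive_tac.
  apply (Rmult_eq_reg_l (e u v)); [lra | exact (frame_scale_neq0 Hf)].
Qed.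

Lemma codazzi_a1_a2 u v : U u v ->
  dv a1 u v - du a2 u v
  = du lam u v * a2 u v - dv lam u v * a3 u v + b1 u v * mu2 u v - b2 u v * mu1 u v.
Proof.
  intros Huv. pose proof (frame_at u v Huv) as Hf.
  pose proof (eta_mixed_partials L0 U (duV Fu) (duV Fv) N1 _ _ u v HU Huv
    ltac:(auto) ltac:(auto) ltac:(auto) (Fuuv_eq_Fuvu u v Huv)
    (fun a b Hab => coord_N1 (Fuu_coords a b Hab))
    (fun a b Hab => coord_N1 (Fuv_coords a b Hab))) as E.
  rewrite (eta_frame_expansion Hf (proj1 (Hsff u v Huv))
       (Fuu_coords u v Huv) (N1v_coords u v Huv)),
    (eta_frame_expansion Hf (proj1 (proj2 (Hsff u v Huv)))
       (Fuv_coords u v Huv) (N1u_coords u v Huv)),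
    dv_exp_mul, du_exp_mul in E by ex_derive_tac.
  apply (Rmult_eq_reg_l (e u v)); [lra | exact (frame_scale_neq0 Hf)].
Qed.

Lemma codazzi_b1_b2 u v : U u v ->
  dv b1 u v - du b2 u v
  = du lam u v * b2 u v - dv lam u v * b3 u v - a1 u v * mu2 u v + a2 u v * mu1 u v.
Proof.
  intros Huv. pose proof (frame_at u v Huv) as Hf.
  pose proof (eta_mixed_partials L0 U (duV Fu) (duV Fv) N2 _ _ u v HU Huv
    ltac:(auto) ltac:(auto) ltac:(auto) (Fuuv_eq_Fuvu u v Huv)
    (fun a b Hab => coord_N2 (Fuu_coords a b Hab))
    (fun a b Hab => coord_N2 (Fuv_coords a b Hab))) as E.
  rewrite (eta_frame_expansion Hf (proj1 (Hsff u v Huv))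
       (Fuu_coords u v Huv) (N2v_coords u v Huv)),
    (eta_frame_expansion Hf (proj1 (proj2 (Hsff u v Huv)))
       (Fuv_coords u v Huv) (N2u_coords u v Huv)),
    dv_exp_mul, du_exp_mul in E by ex_derive_tac.
  apply (Rmult_eq_reg_l (e u v)); [lra | exact (frame_scale_neq0 Hf)].
Qed.

Lemma codazzi_a2_a3 u v : U u v ->
  dv a2 u v - du a3 u v
  = du lam u v * a1 u v - dv lam u v * a2 u v + b2 u v * mu2 u v - b3 u v * mu1 u v.
Proof.
  intros Huv. pose proof (frame_at u v Huv) as Hf.
  pose proof (eta_mixed_partials L0 U (duV Fv) (dvV Fv) N1 _ _ u v HU Huv
    ltac:(auto) ltac:(auto) ltac:(auto) (dvV_duV_comm U Fv u v HU ltac:(auto) Huv)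
    (fun a b Hab => coord_N1 (Fuv_coords a b Hab))
    (fun a b Hab => coord_N1 (Fvv_coords a b Hab))) as E.
  rewrite (eta_frame_expansion Hf (proj1 (proj2 (Hsff u v Huv)))
       (Fuv_coords u v Huv) (N1v_coords u v Huv)),
    (eta_frame_expansion Hf (proj2 (proj2 (Hsff u v Huv)))
       (Fvv_coords u v Huv) (N1u_coords u v Huv)),
    dv_exp_mul, du_exp_mul in E by ex_derive_tac.
  apply (Rmult_eq_reg_l (e u v)); [lra | exact (frame_scale_neq0 Hf)].
Qed.

Lemma codazzi_b2_b3 u v : U u v ->
  dv b2 u v - du b3 u v
  = du lam u v * b1 u v - dv lam u v * b2 u v - a2 u v * mu2 u v + a3 u v * mu1 u v.
Proof.
  intros Huv. pose proof (frame_at u v Huv) as Hf.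
  pose proof (eta_mixed_partials L0 U (duV Fv) (dvV Fv) N2 _ _ u v HU Huv
    ltac:(auto) ltac:(auto) ltac:(auto) (dvV_duV_comm U Fv u v HU ltac:(auto) Huv)
    (fun a b Hab => coord_N2 (Fuv_coords a b Hab))
    (fun a b Hab => coord_N2 (Fvv_coords a b Hab))) as E.
  rewrite (eta_frame_expansion Hf (proj1 (proj2 (Hsff u v Huv)))
       (Fuv_coords u v Huv) (N2v_coords u v Huv)),
    (eta_frame_expansion Hf (proj2 (proj2 (Hsff u v Huv)))
       (Fvv_coords u v Huv) (N2u_coords u v Huv)),
    dv_exp_mul, du_exp_mul in E by ex_derive_tac.
  apply (Rmult_eq_reg_l (e u v)); [lra | exact (frame_scale_neq0 Hf)].
Qed.

Lemma gauss_codazzi_ricci u v : U u v ->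
  (du (du lam) u v - dv (dv lam) u v
    = a1 u v * a3 u v + b1 u v * b3 u v - a2 u v ^ 2 - b2 u v ^ 2 - L0 * e u v) /\
  (dv mu1 u v - du mu2 u v = b2 u v * (a1 u v + a3 u v) - a2 u v * (b1 u v + b3 u v)) /\
  (dv a1 u v - du a2 u v
    = du lam u v * a2 u v - dv lam u v * a3 u v + b1 u v * mu2 u v - b2 u v * mu1 u v) /\
  (dv b1 u v - du b2 u v
    = du lam u v * b2 u v - dv lam u v * b3 u v - a1 u v * mu2 u v + a2 u v * mu1 u v) /\
  (dv a2 u v - du a3 u v
    = du lam u v * a1 u v - dv lam u v * a2 u v + b2 u v * mu2 u v - b3 u v * mu1 u v) /\
  (dv b2 u v - du b3 u v
    = du lam u v * b1 u v - dv lam u v * b2 u v - a2 u v * mu2 u v + a3 u v * mu1 u v).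
Proof.
  intros Huv.
  repeat split; auto using gauss_equation, ricci_equation, codazzi_a1_a2, codazzi_b1_b2,
    codazzi_a2_a3, codazzi_b2_b3.
Qed.

End TimelikeSurface.

Lemma duC_mkC f g u v : duC (mkC f g) u v = (du f u v, du g u v).
Proof. reflexivity. Qed.

Lemma dvC_mkC f g u v : dvC (mkC f g) u v = (dv f u v, dv g u v).
Proof. reflexivity. Qed.

Lemma complex_structure_equations (L0 : R) (lam a1 a2 a3 b1 b2 b3 mu1 mu2 : R -> R -> R) u v :
  du (du lam) u v - dv (dv lam) u v
    = a1 u v * a3 u v + b1 u v * b3 u v - a2 u v ^ 2 - b2 u v ^ 2 - L0 * exp (2 * lam u v) ->
  dv mu1 u v - du mu2 u v = b2 u v * (a1 u v + a3 u v) - a2 u v * (b1 u v + b3 u v) ->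
  dv a1 u v - du a2 u v
    = du lam u v * a2 u v - dv lam u v * a3 u v + b1 u v * mu2 u v - b2 u v * mu1 u v ->
  dv b1 u v - du b2 u v
    = du lam u v * b2 u v - dv lam u v * b3 u v - a1 u v * mu2 u v + a2 u v * mu1 u v ->
  dv a2 u v - du a3 u v
    = du lam u v * a1 u v - dv lam u v * a2 u v + b2 u v * mu2 u v - b3 u v * mu1 u v ->
  dv b2 u v - du b3 u v
    = du lam u v * b1 u v - dv lam u v * b2 u v - a2 u v * mu2 u v + a3 u v * mu1 u v ->
  let W := mkC a2 b1 in
  let X := mkC a2 b3 in
  let Y := mkC b2 (fun u v => - a1 u v) in
  let Z := mkC b2 (fun u v => - a3 u v) in
  let phi := mkC (du lam) (fun u v => - mu2 u v) in
  let psi := mkC (dv lam) (fun u v => - mu1 u v) in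
    (W u v + Cconj (W u v) = X u v + Cconj (X u v))%C /\
    (Y u v + Cconj (Y u v) = Z u v + Cconj (Z u v))%C /\
    (W u v * X u v + Y u v * Z u v + RtoC (L0 * exp (2 * lam u v))
       + duC phi u v - dvC psi u v = 0)%C /\
    (dvC Y u v + Ci * duC X u v = - Ci * W u v * phi u v - Z u v * psi u v)%C /\
    (dvC W u v - Ci * duC Z u v = Ci * Y u v * phi u v - X u v * psi u v)%C.
Proof.
  intros Gauss Ricci Ca1 Cb1 Ca2 Cb2 W X Y Z phi psi.
  unfold W, X, Y, Z, phi, psi.
  rewrite !duC_mkC, !dvC_mkC, !du_opp, !dv_opp. unfold mkC.
  repeat split; apply injective_projections; simpl; lra.
Qed.

Theorem proposition7p1
  (L0 : R) (U : R -> R -> Prop) (F N1 N2 : vfield)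
  (lam a1 a2 a3 b1 b2 b3 mu1 mu2 : R -> R -> R) :
  open2 U ->
  (* all objects smooth *)
  (forall i, smooth_on U (fun u v => F u v i)) ->
  (forall i, smooth_on U (fun u v => N1 u v i)) ->
  (forall i, smooth_on U (fun u v => N2 u v i)) ->
  smooth_on U lam ->
  smooth_on U a1 -> smooth_on U a2 -> smooth_on U a3 ->
  smooth_on U b1 -> smooth_on U b2 -> smooth_on U b3 ->
  smooth_on U mu1 -> smooth_on U mu2 ->
  (* F maps U into the space form N *)
  (forall u v, U u v -> inN L0 (F u v)) ->
  (* time-like conformal immersion, induced metric e^{2 lam}(du^2 - dv^2) *)
  (forall u v, U u v ->
     eta L0 (duV F u v) (duV F u v) = exp (2 * lam u v) /\
     eta L0 (dvV F u v) (dvV F u v) = - exp (2 * lam u v) /\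
     eta L0 (duV F u v) (dvV F u v) = 0) ->
  (* N1, N2 normal vector fields *)
  (forall u v, U u v ->
     tangentN L0 (F u v) (N1 u v) /\ tangentN L0 (F u v) (N2 u v) /\
     eta L0 (N1 u v) (duV F u v) = 0 /\ eta L0 (N1 u v) (dvV F u v) = 0 /\
     eta L0 (N2 u v) (duV F u v) = 0 /\ eta L0 (N2 u v) (dvV F u v) = 0 /\
     eta L0 (N1 u v) (N1 u v) = exp (2 * lam u v) /\
     eta L0 (N2 u v) (N2 u v) = exp (2 * lam u v) /\
     eta L0 (N1 u v) (N2 u v) = 0) ->
  (* second fundamental form *)
  (forall u v, U u v ->
     normal_part_is L0 (F u v) (duV F u v) (dvV F u v) (duV (duV F) u v)
       (vlin (a1 u v) (N1 u v) (b1 u v) (N2 u v)) /\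
     normal_part_is L0 (F u v) (duV F u v) (dvV F u v) (duV (dvV F) u v)
       (vlin (a2 u v) (N1 u v) (b2 u v) (N2 u v)) /\
     normal_part_is L0 (F u v) (duV F u v) (dvV F u v) (dvV (dvV F) u v)
       (vlin (a3 u v) (N1 u v) (b3 u v) (N2 u v))) ->
  (* normal connection *)
  (forall u v, U u v ->
     normal_part_is L0 (F u v) (duV F u v) (dvV F u v) (duV N1 u v)
       (vlin (du lam u v) (N1 u v) (mu1 u v) (N2 u v)) /\
     normal_part_is L0 (F u v) (duV F u v) (dvV F u v) (dvV N1 u v)
       (vlin (dv lam u v) (N1 u v) (mu2 u v) (N2 u v))) ->
  let W := mkC a2 b1 in
  let X := mkC a2 b3 in
  let Y := mkC b2 (fun u v => - a1 u v) in
  let Z := mkC b2 (fun u v => - a3 u v) in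
  let phi := mkC (du lam) (fun u v => - mu2 u v) in
  let psi := mkC (dv lam) (fun u v => - mu1 u v) in
  forall u v, U u v ->
    (W u v + Cconj (W u v) = X u v + Cconj (X u v))%C /\
    (Y u v + Cconj (Y u v) = Z u v + Cconj (Z u v))%C /\
    (W u v * X u v + Y u v * Z u v + RtoC (L0 * exp (2 * lam u v))
       + duC phi u v - dvC psi u v = 0)%C /\
    (dvC Y u v + Ci * duC X u v = - Ci * W u v * phi u v - Z u v * psi u v)%C /\
    (dvC W u v - Ci * duC Z u v = Ci * Y u v * phi u v - X u v * psi u v)%C.
Proof.
  intros HU HF HN1 HN2 Hlam Ha1 Ha2 Ha3 Hb1 Hb2 Hb3 Hmu1 Hmu2 HinN Hmetric Hnormal Hsff Hnc.
  intros W X Y Z phi psi u v Huv.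
  destruct (gauss_codazzi_ricci L0 U F N1 N2 lam a1 a2 a3 b1 b2 b3 mu1 mu2
    HU HF HN1 HN2 Hlam Ha1 Ha2 Ha3 Hb1 Hb2 Hb3 Hmu1 Hmu2 HinN Hmetric Hnormal Hsff Hnc u v Huv)
    as (Gauss & Ricci & Ca1 & Cb1 & Ca2 & Cb2).
  exact (complex_structure_equations L0 lam a1 a2 a3 b1 b2 b3 mu1 mu2 u v
    Gauss Ricci Ca1 Cb1 Ca2 Cb2).
Qed.
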